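(* A Borel probability measure $\pi$ on $[0,1]$ is a minimax prior if and only if $\int_{[0,1]}\theta\,\pi(d\theta)=1/2$ and $\int_{[0,1]}\theta^2\,\pi(d\theta)=2/5$.
   Context: Bernoulli model: for $\theta\in[0,1]$, $p_\theta(x)=\theta^x(1-\theta)^{1-x}$, $x\in\{0,1\}$. One observes $x\sim p_\theta$ and predicts an independent future $y\sim p_\theta$. A nonrandomized decision is a pair $\delta=(\delta_0,\delta_1)\in\mathcal D=[0,1]^2$, used as the predictive distribution $p_\delta(y\mid x)=\delta_x^{\,y}(1-\delta_x)^{1-y}$. The Kullback–Leibler risk is $R_\delta(\theta)=-S(\theta)+\theta^2\log\frac1{\delta_1}+\theta(1-\theta)\log\frac1{1-\delta_1}+\theta(1-\theta)\log\frac1{\delta_0}+(1-\theta)^2\log\frac1{1-\delta_0}\in[0,+\infty]$, where $S(\theta)=-\theta\log\theta-(1-\theta)\log(1-\theta)$ is the binary entropy, with conventions $0\log 0=0$, $\log(1/0)=+\infty$, $0\cdot(+\infty)=0$. A decision is minimax if it minimizes $\sup_{\theta\in[0,1]}R_\delta(\theta)$ over $\mathcal D$. A prior is a Borel probability measure $\pi$ on $[0,1]$; a decision $\delta$ is Bayes with respect to $\pi$ if it minimizes $\int_{[0,1]}R_\delta(\theta)\,\pi(d\theta)$ over $\mathcal D$. A prior $\pi$ is called a minimax prior if a Bayes decision with respect to $\pi$ is minimax. *)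

From HB Require Import structures.
From mathcomp Require Import all_boot all_order all_algebra.
From mathcomp Require Import all_classical all_reals all_analysis.
Set Implicit Arguments. Unset Strict Implicit. Unset Printing Implicit Defensive.
Import Order.TTheory GRing.Theory Num.Theory.
Local Open Scope classical_set_scope.
Local Open Scope ring_scope.

Section Bernoulli.
Variable R : realType.

Definition xlogx (x : R) : R := if x == 0 then 0 else x * ln x.

Definition entropy (t : R) : R := - xlogx t - xlogx (1 - t).

Definition nlog (d : R) : \bar R := if d == 0 then +oo%E else (- ln d)%:E.

Definition wterm (c d : R) : \bar R := if c == 0 then 0%E else (c%:E * nlog d)%E.

Definition decisions : set (R * R) := [set d | 0 <= d.1 <= 1 /\ 0 <= d.2 <= 1].

(* Kullback-Leibler risk R_delta(theta) *)
Definition risk (d : R * R) (t : R) : \bar R :=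
  ((- entropy t)%:E
   + wterm (t ^+ 2) d.2 + wterm (t * (1 - t)) (1 - d.2)
   + wterm (t * (1 - t)) d.1 + wterm ((1 - t) ^+ 2) (1 - d.1))%E.

Definition max_risk (d : R * R) : \bar R := ereal_sup (risk d @` `[0%R, 1%R]%classic).

Definition minimax (d : R * R) : Prop :=
  decisions d /\ forall d', decisions d' -> (max_risk d <= max_risk d')%E.

Definition bayes_risk (P : probability R R) (d : R * R) : \bar R :=
  (\int[P]_(t in `[0%R, 1%R]) risk d t)%E.

Definition bayes (P : probability R R) (d : R * R) : Prop :=
  decisions d /\ forall d', decisions d' -> (bayes_risk P d <= bayes_risk P d')%E.

Definition prior (P : probability R R) : Prop := P `[0%R, 1%R]%classic = 1%E.

Definition minimax_prior (P : probability R R) : Prop :=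
  exists d, bayes P d /\ minimax d.

End Bernoulli.

From HB Require Import structures.
From mathcomp Require Import all_boot all_order all_algebra.
From mathcomp Require Import all_classical all_reals all_analysis.
From mathcomp Require Import measurable_realfun ring lra.
Import Order.TTheory GRing.Theory Num.Theory.
Local Open Scope classical_set_scope.
Local Open Scope ring_scope.

(* The decision δ* = (1/5, 4/5) is the unique minimax decision, with maximal
   risk ln(5/4): its risk is ln(5/4) - S(θ) + 4 ln 2 θ(1-θ) <= ln(5/4) because
   S(θ) >= 4 ln 2 θ(1-θ) on [0,1], while by Gibbs' inequality any other decision
   has Bayes risk above ln(5/4) for the prior 3/10 δ_0 + 2/5 δ_(1/2) + 3/10 δ_1,
   hence maximal risk above ln(5/4).  So π is a minimax prior iff δ* is Bayes
   for π.  For an interior decision (a, b) the Bayes risk is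
     E_π[-S] + m2 ln(1/b) + (m1 - m2) (ln(1/(1-b)) + ln(1/a)) + (1 - 2 m1 + m2) ln(1/(1-a)),
   where m_k = E_π[θ^k]; stationarity at δ* gives m2 = 4/5 m1 and
   m1 - m2 = 1/5 (1 - m1), i.e. m1 = 1/2 and m2 = 2/5.  Conversely, bounding each
   ln(1/d) below by its tangent at the corresponding coordinate of δ* shows that
   for these moments no decision, even on the boundary, beats δ*. *)

Section ln_bounds.
Context {R : realType}.
Implicit Types x y : R.

Lemma ln_le_subr1 x : 0 < x -> ln x <= x - 1.
Proof. by move=> x0; have := @le_ln1Dx R (x - 1); rewrite [1 + _]addrC subrK; apply; lra. Qed.

Lemma ln_lt_subr1 x : 0 < x -> x != 1 -> ln x < x - 1.
Proof.
move=> x0 x1; have := @expR_gt1Dx R (ln x); rewrite lnK ?posrE // ln_eq0 //.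
by move=> /(_ x1); lra.
Qed.

Definition taylor_ln3 : {poly R} :=
  ('X - 1) - 2^-1 *: ('X - 1) ^+ 2 + 3^-1 *: ('X - 1) ^+ 3.

Lemma taylor_ln3E y : taylor_ln3.[y] = (y - 1) - (y - 1) ^+ 2 / 2 + (y - 1) ^+ 3 / 3.
Proof. by rewrite !(hornerD, hornerN, hornerZ, horner_exp, hornerX, hornerC); field. Qed.

Lemma is_derive_taylor_ln3_sub_ln y : 0 < y ->
  is_derive y 1 (horner taylor_ln3 - @ln R) ((y - 1) ^+ 3 / y).
Proof.
move=> y0.
apply: is_derive_eq (is_deriveB (is_derive_poly taylor_ln3 y) (is_derive1_ln y0)) _.
by rewrite !poly.derivE !hornerE /=; field; lra.
Qed.

Lemma ln_le_taylor3 y : 0 < y -> ln y <= (y - 1) - (y - 1) ^+ 2 / 2 + (y - 1) ^+ 3 / 3.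
Proof.
(* [(taylor_ln3 - ln)' = (y - 1)^3 / y] changes sign at 1, where [taylor_ln3 - ln] vanishes. *)
move=> y0; pose g := horner taylor_ln3 - @ln R.
have mvt (a b : R) : 0 < a -> a <= b ->
    exists2 c, a <= c <= b & g b - g a = (c - 1) ^+ 3 / c * (b - a).
  move=> a0 ab; have [||c] := @MVT_segment R g (fun c => (c - 1) ^+ 3 / c) a b ab.
  - by move=> c; rewrite in_itv /= => /andP[ac _]; apply: is_derive_taylor_ln3_sub_ln; lra.
  - apply: derivable_within_continuous => c; rewrite in_itv /= => /andP[ac _].
    by apply: ex_derive; apply: is_derive_taylor_ln3_sub_ln; lra.
  by rewrite in_itv /= => cab ->; exists c.
have g1 : g 1 = 0 by rewrite /g !fctE taylor_ln3E ln1; ring.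
suff : 0 <= g y by rewrite /g !fctE taylor_ln3E; lra.
have cube (c : R) : 0 < c -> (c - 1) ^+ 3 / c = (c - 1) * ((c - 1) ^+ 2 / c).
  by move=> c0; rewrite exprS mulrA.
have sq_ge0 (c : R) : 0 < c -> 0 <= (c - 1) ^+ 2 / c.
  by move=> c0; apply: divr_ge0; [exact: sqr_ge0 | lra].
have [y1|y1] := lerP y 1.
- have [c /andP[yc c1]] := mvt y 1 y0 y1; rewrite g1 cube; last lra.
  have : (c - 1) * ((c - 1) ^+ 2 / c) <= 0 by apply: mulr_le0_ge0; [lra | apply: sq_ge0; lra].
  nra.
- have [c /andP[c1 cy]] := mvt 1 y ltr01 (ltW y1); rewrite g1 cube; last lra.
  have : 0 <= (c - 1) * ((c - 1) ^+ 2 / c) by apply: mulr_ge0; [lra | apply: sq_ge0; lra].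
  nra.
Qed.

Lemma ln2_ge : 2 / 3 <= ln (2 : R).
Proof.
have := @ln_le_taylor3 (2^-1) ltac:(lra); rewrite lnV ?posrE //.
rewrite !exprS expr0; lra.
Qed.

Lemma ln2_le : ln (2 : R) <= 3 / 4.
Proof.
have -> : (2 : R) = (4 / 3) * (3 / 2) by field.
rewrite lnM ?posrE; [|lra|lra].
have := @ln_le_taylor3 (4 / 3) ltac:(lra); have := @ln_le_taylor3 (3 / 2) ltac:(lra).
rewrite !exprS expr0; lra.
Qed.

Lemma ln4_5 : ln (4 / 5 : R) = 2 * ln 2 - ln 5.
Proof.
rewrite lnM ?posrE // lnV ?posrE // (_ : 4 = 2 ^+ 2 :> R); last by rewrite expr2; lra.
by rewrite lnXn // mulr2n; ring.
Qed.

End ln_bounds.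

Section loglik.
Context {R : realType}.
Implicit Types p q x y : R.

Definition loglik p q y : R := p * ln y + q * ln (1 - y).

Lemma is_derive_loglik p q y : 0 < y < 1 ->
  is_derive y 1 (loglik p q) (p / y - q / (1 - y)).
Proof.
move=> /andP[y0 y1].
have d1B : is_derive y 1 (fun z : R => 1 - z) (-1).
  by have := is_deriveB (is_derive_cst (1 : R) y 1) (is_derive_id y 1); rewrite sub0r.
have dln1B : is_derive y 1 (@ln R \o (fun z => 1 - z)) ((1 - y)^-1 * -1).
  by apply: is_derive1_comp d1B; apply: is_derive1_ln; lra.
apply: is_derive_eq (is_deriveD (is_deriveZ p (is_derive1_ln y0)) (is_deriveZ q dln1B)) _.
by rewrite /GRing.scale /=; field; lra.
Qed.

Lemma loglik_argmax {p q x0} : 0 < x0 < 1 ->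
  (forall x, 0 < x < 1 -> loglik p q x <= loglik p q x0) -> p = x0 * (p + q).
Proof.
move=> /[dup] x0I /andP[x00 x01] x0max.
have inI y : y \in `]0, 1[ -> 0 < y < 1 by rewrite in_itv.
have dl y : y \in `]0, 1[ -> derivable (loglik p q) y 1.
  by move=> /inI yI; have [] := is_derive_loglik p q y yI.
have x0in : x0 \in `]0, 1[ by rewrite in_itv /= x00 x01.
have := derive1_at_max ler01 dl x0in (fun y yI => x0max y (inI y yI)).
move=> /(@derive_val _ _ _ _ _ _ _).
rewrite (@derive_val _ _ _ _ _ _ _ (is_derive_loglik p q x0 x0I)).
have -> : p / x0 - q / (1 - x0) = (p - x0 * (p + q)) / (x0 * (1 - x0)) by field; lra.
by move/eqP; rewrite mulf_eq0 invr_eq0 mulf_eq0 subr_eq0 => /orP[/eqP //|]; lra.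
Qed.

Lemma loglik_lt p x : 0 < p < 1 -> 0 < x < 1 -> x != p ->
  loglik p (1 - p) x < loglik p (1 - p) p.
Proof.
move=> /andP[p0 p1] /andP[x0 x1] xp.
have lnx : ln x - ln p < x / p - 1.
  rewrite -ln_div ?posrE //; apply: ln_lt_subr1; first exact: divr_gt0.
  by apply: contra xp => /eqP xp1; rewrite -[x](divfK (_ : p != 0)) ?xp1 ?mul1r //; lra.
have ln1Bx : ln (1 - x) - ln (1 - p) <= (1 - x) / (1 - p) - 1.
  by rewrite -ln_div ?posrE; [apply: ln_le_subr1; apply: divr_gt0|..]; lra.
have lnx_p : p * (ln x - ln p) < x - p.
  by rewrite (_ : x - p = p * (x / p - 1)) ?ltr_pM2l //; field; lra.
have ln1Bx_p : (1 - p) * (ln (1 - x) - ln (1 - p)) <= p - x.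
  rewrite (_ : p - x = (1 - p) * ((1 - x) / (1 - p) - 1)); last by field; lra.
  by rewrite ler_wpM2l //; lra.
rewrite /loglik; lra.
Qed.

Lemma loglik_le p x : 0 < p < 1 -> 0 < x < 1 -> loglik p (1 - p) x <= loglik p (1 - p) p.
Proof.
move=> pI xI; have [->//|xp] := eqVneq x p.
exact/ltW/loglik_lt.
Qed.

End loglik.

Section entropy.
Context {R : realType}.
Implicit Types t : R.

Lemma xlogxE t : xlogx t = t * ln t.
Proof. by rewrite /xlogx; case: eqP => [->|//]; rewrite mul0r. Qed.

Lemma entropyE t : entropy t = - (t * ln t) - (1 - t) * ln (1 - t).
Proof. by rewrite /entropy !xlogxE. Qed.

Lemma entropy1C t : entropy (1 - t) = entropy t.
Proof. by rewrite !entropyE subKr; ring. Qed.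

Lemma entropy0 : entropy (0 : R) = 0.
Proof. by rewrite entropyE subr0 ln1; ring. Qed.

Lemma entropy1 : entropy (1 : R) = 0.
Proof. by rewrite -entropy1C subrr entropy0. Qed.

Lemma entropy_half : entropy (2^-1 : R) = ln 2.
Proof.
rewrite entropyE (_ : 1 - 2^-1 = 2^-1 :> R); last by field.
by rewrite lnV ?posrE //; field.
Qed.

Lemma measurable_xlogx : measurable_fun setT (@xlogx R).
Proof.
rewrite (_ : @xlogx R = fun t => t * ln t); last by apply/funext => t; rewrite xlogxE.
by apply: measurable_funM; [exact: measurable_id | exact: measurable_ln].
Qed.

Lemma measurable_entropy : measurable_fun setT (@entropy R).
Proof.
rewrite /entropy; apply: measurable_funB.
  by apply: measurable_funN; exact: measurable_xlogx.
apply: measurableT_comp; first exact: measurable_xlogx.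
by apply: measurable_funB; [exact: measurable_cst | exact: measurable_id].
Qed.

Lemma abs_xlogx_le1 t : 0 <= t <= 1 -> `|xlogx t| <= 1.
Proof.
move=> /andP[t0 t1]; rewrite xlogxE.
have [->|t_n0] := eqVneq t 0; first by rewrite mul0r normr0.
have t_pos : 0 < t by rewrite lt_def t_n0.
have : ln t^-1 <= t^-1 - 1 by apply: ln_le_subr1; rewrite invr_gt0.
rewrite lnV ?posrE // => lnVt.
have : t * - ln t <= t * (t^-1 - 1) by rewrite ler_wpM2l.
rewrite (_ : t * (t^-1 - 1) = 1 - t); last by field; lra.
have := ln_le0 t1; rewrite ler_norml; nra.
Qed.

Lemma entropy_ge_quad_small t : 0 < t <= 3 / 20 ->
  4 * ln 2 * (t * (1 - t)) <= entropy t.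
Proof.
(* [- t ln t] absorbs the quadratic term since [ln (16 t) <= ln (12 / 5) <= 1]. *)
move=> /andP[t0 t_small]; rewrite entropyE.
have ln1Bt : ln (1 - t) <= - t by have := @ln_le_subr1 R (1 - t); lra.
have ln16t : ln t + 4 * ln 2 <= 1.
  have -> : ln t + 4 * ln 2 = ln (16 * t).
    rewrite lnM ?posrE // (_ : 16 = 2 ^+ 4 :> R); last by rewrite !exprS expr0; lra.
    by rewrite lnXn // mulr_natl addrC.
  have : ln (16 * t) <= ln (2 * (6 / 5)) by rewrite ler_ln ?posrE; lra.
  rewrite [ln (2 * _)]lnM ?posrE; [|lra|lra].
  have := @ln_le_taylor3 R (6 / 5) ltac:(lra); have := @ln2_le R.
  rewrite !exprS expr0; lra.
have : t * (ln t + 4 * ln 2 - 1) <= 0 by apply: mulr_ge0_le0; lra.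
have : (1 - t) * (ln (1 - t) + t) <= 0 by apply: mulr_ge0_le0; lra.
have : 0 <= t * t * (4 * ln 2 - 1).
  by apply: mulr_ge0; [nra | have := @ln2_ge R; lra].
nra.
Qed.

Lemma entropy_ge_quad_central t : 3 / 20 <= t <= 2^-1 ->
  4 * ln 2 * (t * (1 - t)) <= entropy t.
Proof.
(* Bounding [ln] at [2 t] and [2 (1 - t)] by [ln_le_taylor3] leaves a polynomial
   inequality in [u = 1 - 2 t]. *)
move=> /andP[t_big t_half]; rewrite entropyE.
have [t0 t1] : 0 <= t /\ 0 <= 1 - t by split; lra.
pose u := 1 - 2 * t.
have ln2t : ln 2 + ln t <= - u - u ^+ 2 / 2 - u ^+ 3 / 3.
  rewrite -lnM ?posrE; [|lra|lra].
  have := @ln_le_taylor3 R (2 * t) ltac:(lra); rewrite /u !exprS expr0; lra.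
have ln21Bt : ln 2 + ln (1 - t) <= u - u ^+ 2 / 2 + u ^+ 3 / 3.
  rewrite -lnM ?posrE; [|lra|lra].
  have := @ln_le_taylor3 R (2 * (1 - t)) ltac:(lra); rewrite /u !exprS expr0; lra.
have := ler_wpM2l t0 ln2t; have := ler_wpM2l t1 ln21Bt.
have : 2 / 3 * (u * u) <= ln 2 * (u * u) by rewrite ler_wpM2r ?ln2_ge //; nra.
have u0 : 0 <= u by rewrite /u; lra.
have u1 : u <= 7 / 10 by rewrite /u; lra.
have : 0 <= (u * u) * (2^-1 - u * u) by apply: mulr_ge0; nra.
have -> : t = (1 - u) / 2 by rewrite /u; field.
rewrite !exprS expr0; move=> *; nra.
Qed.

Lemma entropy_ge_quad t : 0 <= t <= 1 -> 4 * ln 2 * (t * (1 - t)) <= entropy t.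
Proof.
have half (s : R) : 0 <= s <= 2^-1 -> 4 * ln 2 * (s * (1 - s)) <= entropy s.
  move=> /andP[s0 s_half]; have [s_small|s_big] := lerP s (3 / 20).
  - have [->|s_pos] := eqVneq s 0; first by rewrite entropy0 mul0r mulr0.
    by apply: entropy_ge_quad_small; rewrite s_small andbT lt_def s_pos s0.
  - by apply: entropy_ge_quad_central; rewrite s_half andbT ltW.
move=> /andP[t0 t1]; have [t_half|t_half] := lerP t 2^-1; first by apply: half; lra.
have -> : t * (1 - t) = (1 - t) * (1 - (1 - t)) by ring.
by rewrite -entropy1C; apply: half; lra.
Qed.

End entropy.

Section risk.
Context {R : realType}.
Implicit Types a b c d x y z t : R.

Lemma EFin_adde_ge0_pinfty x (e1 e2 e3 e4 : \bar R) :
  (0 <= e1)%E -> (0 <= e2)%E -> (0 <= e3)%E -> (0 <= e4)%E ->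
  [\/ e1 = +oo, e2 = +oo, e3 = +oo | e4 = +oo]%E ->
  (x%:E + e1 + e2 + e3 + e4 = +oo)%E.
Proof.
by case: e1 e2 e3 e4 => [?||] [?||] [?||] [?||] //= _ _ _ _ [].
Qed.

Lemma wterm_fin c d : d != 0 -> wterm c d = (c * - ln d)%:E.
Proof. by move=> d0; rewrite /wterm /nlog (negbTE d0); case: eqP => [->|]; rewrite ?mul0r. Qed.

Lemma wterm_pinfty c : 0 < c -> wterm c 0 = +oo%E.
Proof. by move=> c0; rewrite /wterm gt_eqF // /nlog eqxx mulr_infty gtr0_sg // mul1e. Qed.

Lemma wterm_ge0 c d : 0 <= c -> 0 <= d <= 1 -> (0 <= wterm c d)%E.
Proof.
move=> c0 /andP[d0 d1]; have [->|dn0] := eqVneq d 0.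
  by rewrite /wterm /nlog eqxx; case: eqP => // _; rewrite mule_ge0 ?lee_fin ?leey.
by rewrite wterm_fin // lee_fin mulr_ge0 // oppr_ge0 ln_le0.
Qed.

Definition nlog_tangent (x0 d : R) : R := - ln x0 - (d - x0) / x0.

Lemma wterm_ge_tangent c d x0 : 0 <= c -> 0 <= d -> 0 < x0 ->
  ((c * nlog_tangent x0 d)%:E <= wterm c d)%E.
Proof.
move=> c0 d0 x00; have [->|cn0] := eqVneq c 0; first by rewrite /wterm eqxx mul0r.
have [->|dn0] := eqVneq d 0; first by rewrite wterm_pinfty ?leey // lt_def cn0.
rewrite wterm_fin // lee_fin ler_wpM2l // /nlog_tangent.
have d_pos : 0 < d by rewrite lt_def dn0.
have := @ln_le_subr1 R (d / x0) (divr_gt0 d_pos x00).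
rewrite ln_div ?posrE // (_ : (d - x0) / x0 = d / x0 - 1); last by field; lra.
lra.
Qed.

Definition risk_form x y z t : R :=
  - entropy t + (t ^+ 2 * x + t * (1 - t) * y + (1 - t) ^+ 2 * z).

Lemma riskE a b t : 0 < a < 1 -> 0 < b < 1 ->
  risk (a, b) t = (risk_form (- ln b) (- ln (1 - b) - ln a) (- ln (1 - a)) t)%:E.
Proof.
move=> /andP[a0 a1] /andP[b0 b1].
by rewrite /risk /= !wterm_fin; [congr EFin; rewrite /risk_form; ring|lra..].
Qed.

Lemma risk_form0 x y z : risk_form x y z 0 = z.
Proof. by rewrite /risk_form entropy0; ring. Qed.

Lemma risk_form1 x y z : risk_form x y z 1 = x.
Proof. by rewrite /risk_form entropy1; ring. Qed.

Lemma risk_form_half x y z : risk_form x y z 2^-1 = - ln 2 + (x + y + z) / 4.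
Proof. by rewrite /risk_form entropy_half; field. Qed.

Lemma risk_ge_tangent a b t : decisions (a, b) -> 0 <= t <= 1 ->
  ((risk_form (nlog_tangent (4 / 5) b)
     (nlog_tangent (5^-1) (1 - b) + nlog_tangent (5^-1) a)
     (nlog_tangent (4 / 5) (1 - a)) t)%:E <= risk (a, b) t)%E.
Proof.
move=> [/= /andP[a0 a1] /andP[b0 b1]] /andP[t0 t1]; rewrite /risk /=.
have tt : 0 <= t * (1 - t) by apply: mulr_ge0; lra.
have h1 := @wterm_ge_tangent (t ^+ 2) b (4 / 5) (sqr_ge0 t) b0 ltac:(lra).
have h2 := @wterm_ge_tangent (t * (1 - t)) (1 - b) 5^-1 tt ltac:(lra) ltac:(lra).
have h3 := @wterm_ge_tangent (t * (1 - t)) a 5^-1 tt a0 ltac:(lra).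
have h4 := @wterm_ge_tangent ((1 - t) ^+ 2) (1 - a) (4 / 5) (sqr_ge0 _) ltac:(lra) ltac:(lra).
apply: le_trans (leeD (leeD (leeD (leeD (lexx (- entropy t)%:E) h1) h2) h3) h4).
rewrite -!EFinD lee_fin /risk_form le_eqVlt; apply/orP; left; apply/eqP; ring.
Qed.

Definition minimax_value : R := ln (5 / 4).

Lemma minimax_valueE : minimax_value = ln 5 - 2 * ln 2.
Proof. by rewrite /minimax_value -[5 / 4]invf_div lnV ?posrE // ln4_5; ring. Qed.

Definition delta_star : R * R := (5^-1, 4 / 5).

Lemma delta_star_decision : decisions delta_star.
Proof. by rewrite /decisions /=; split; apply/andP; split; lra. Qed.

Lemma risk_delta_star t :
  risk delta_star t = (minimax_value - entropy t + 4 * ln 2 * (t * (1 - t)))%:E.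
Proof.
rewrite riskE; [|lra|lra].
rewrite (_ : 1 - 4 / 5 = 5^-1); last by field.
rewrite (_ : 1 - 5^-1 = 4 / 5); last by field.
by rewrite lnV ?posrE // ln4_5 minimax_valueE /risk_form; congr EFin; ring.
Qed.

Lemma risk_le_max_risk (d : R * R) t : 0 <= t <= 1 -> (risk d t <= max_risk d)%E.
Proof. by move=> tI; apply: ereal_sup_ubound; exists t; rewrite //= in_itv. Qed.

Lemma max_risk_delta_star : (max_risk delta_star <= minimax_value%:E)%E.
Proof.
apply: ge_ereal_sup => _ [t /= + <-]; rewrite in_itv /= => tI.
by rewrite risk_delta_star lee_fin; have := @entropy_ge_quad R t tI; lra.
Qed.

Lemma risk_half_pinfty a b : decisions (a, b) ->
  ~~ ((0 < a < 1) && (0 < b < 1)) -> risk (a, b) 2^-1 = +oo%E.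
Proof.
move=> [/= /andP[a0 a1] /andP[b0 b1]] abI.
have c1 : 0 < 2^-1 ^+ 2 :> R by rewrite exprn_gt0.
have c2 : 0 < 2^-1 * (1 - 2^-1) :> R by rewrite mulr_gt0 //; lra.
have c3 : 0 < (1 - 2^-1) ^+ 2 :> R by rewrite exprn_gt0 //; lra.
rewrite /risk /=; apply: EFin_adde_ge0_pinfty; try by apply: wterm_ge0; lra.
have [->|a_n0] := eqVneq a 0; first by apply: Or43; rewrite wterm_pinfty.
have [->|a_n1] := eqVneq a 1; first by apply: Or44; rewrite subrr wterm_pinfty.
have [->|b_n0] := eqVneq b 0; first by apply: Or41; rewrite wterm_pinfty.
have [->|b_n1] := eqVneq b 1; first by apply: Or42; rewrite subrr wterm_pinfty.
have aI : 0 < a < 1 by rewrite !lt_def a_n0 a0 a1 eq_sym a_n1.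
have bI : 0 < b < 1 by rewrite !lt_def b_n0 b0 b1 eq_sym b_n1.
by rewrite aI bI in abI.
Qed.

(* The right-hand side is the Bayes risk of [(a, b)] for the prior
   [3/10 δ_0 + 2/5 δ_(1/2) + 3/10 δ_1], which has the moments of the theorem. *)
Lemma three_point_risk_gt {a b} : 0 < a < 1 -> 0 < b < 1 -> (a, b) != delta_star ->
  minimax_value <
  2 / 5 * - ln b + 1 / 10 * (- ln (1 - b) - ln a) + 2 / 5 * - ln (1 - a) - 2 / 5 * ln 2.
Proof.
move=> aI bI abD.
have lb := @loglik_le _ (4 / 5) b ltac:(lra) bI.
have la := @loglik_le _ 5^-1 a ltac:(lra) aI.
have strict : loglik (4 / 5) (1 - 4 / 5) b < loglik (4 / 5) (1 - 4 / 5) (4 / 5) \/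
              loglik 5^-1 (1 - 5^-1) a < loglik 5^-1 (1 - 5^-1) 5^-1.
  have [ea|na] := eqVneq a 5^-1; last by right; apply: loglik_lt => //; lra.
  have [eb|nb] := eqVneq b (4 / 5); last by left; apply: loglik_lt => //; lra.
  by move: abD; rewrite ea eb eqxx.
move: lb la strict; rewrite /loglik (_ : 1 - 4 / 5 = 5^-1); last by field.
rewrite (_ : 1 - 5^-1 = 4 / 5); last by field.
by rewrite lnV ?posrE // ln4_5 minimax_valueE => lb la [] ?; lra.
Qed.

Lemma max_risk_gt (d : R * R) : decisions d -> d != delta_star ->
  (minimax_value%:E < max_risk d)%E.
Proof.
case: d => a b dab abD.
have [/andP[aI bI]|abI] := boolP ((0 < a < 1) && (0 < b < 1)); last first.
  have := @risk_le_max_risk (a, b) 2^-1 ltac:(lra).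
  by rewrite risk_half_pinfty // leye_eq => /eqP ->; exact: ltry.
have r t : 0 <= t <= 1 ->
    ((risk_form (- ln b) (- ln (1 - b) - ln a) (- ln (1 - a)) t)%:E <= max_risk (a, b))%E.
  by rewrite -riskE //; exact: risk_le_max_risk.
have := three_point_risk_gt aI bI abD.
move: (r 0 ltac:(lra)) (r 1 ltac:(lra)) (r 2^-1 ltac:(lra)).
rewrite risk_form0 risk_form1 risk_form_half.
by case: max_risk => [M||]; rewrite ?ltry ?leeNy_eq // !lee_fin lte_fin; lra.
Qed.

Lemma minimax_delta_star : minimax delta_star.
Proof.
split=> [|d dD]; first exact: delta_star_decision.
have [->//|dn] := eqVneq d delta_star.
apply: le_trans max_risk_delta_star _; exact/ltW/max_risk_gt.
Qed.

Lemma minimax_eq_delta_star (d : R * R) : minimax d -> d = delta_star.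
Proof.
move=> [dD dmin]; apply/eqP; apply: contraT => dn.
have := le_trans (dmin _ delta_star_decision) max_risk_delta_star.
by rewrite leNgt max_risk_gt.
Qed.

End risk.

(* Unlike [le_integral], nothing is assumed about [f] and [g]: the order passes
   to their positive and negative parts. *)
Lemma le_integral_pointwise {d} {T : measurableType d} {R : realType}
    {mu : {measure set T -> \bar R}} {D : set T} {f g : T -> \bar R} :
  (forall x, D x -> (f x <= g x)%E) ->
  (\int[mu]_(x in D) f x <= \int[mu]_(x in D) g x)%E.
Proof.
move=> fg; rewrite /integral; apply: leeB; apply: ereal_sup_le.
- move=> _ [h hle <-]; exists h => // x; apply: le_trans (hle x) _.
  apply: (@funepos_le _ _ setT) => //; last by rewrite in_setT.
  by move=> y _; rewrite /patch; case: ifP => // /set_mem; exact: fg.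
- move=> _ [h hle <-]; exists h => // x; apply: le_trans (hle x) _.
  apply: (@funeneg_le _ _ setT) => //; last by rewrite in_setT.
  by move=> y _; rewrite /patch; case: ifP => // /set_mem; exact: fg.
Qed.

Section bayes.
Context {R : realType}.
Variable P : probability R R.

Definition moment (n : nat) : R := fine (\int[P]_(t in `[0%R, 1%R]) (t ^+ n)%:E).

Definition mean_negentropy : R := fine (\int[P]_(t in `[0%R, 1%R]) (- entropy t)%:E).

Let I01 : measurable (`[0%R, 1%R] : set R). Proof. exact: measurable_itv. Qed.

Lemma integrable_bounded01 (f : R -> R) (M : R) : measurable_fun setT f ->
  (forall t, 0 <= t <= 1 -> `|f t| <= M) -> P.-integrable `[0%R, 1%R] (EFin \o f).
Proof.
move=> mf fM; apply: measurable_bounded_integrable => //.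
- by rewrite (le_lt_trans (probability_le1 _ _)) ?ltry.
- exact: measurable_funS mf.
exists M; split; first exact: num_real.
by move=> N MN t; rewrite /= in_itv /= => /fM/le_trans; apply; exact: ltW.
Qed.

Lemma integrable_negentropy : P.-integrable `[0%R, 1%R] (EFin \o (fun t => - entropy t)).
Proof.
apply: (@integrable_bounded01 _ 2); first by apply: measurable_funN; exact: measurable_entropy.
move=> t /andP[t0 t1]; rewrite normrN /entropy.
have := @abs_xlogx_le1 _ t ltac:(lra); have := @abs_xlogx_le1 _ (1 - t) ltac:(lra).
by have := ler_normB (- xlogx t) (xlogx (1 - t)); rewrite normrN; lra.
Qed.

Lemma integral_negentropy :
  (\int[P]_(t in `[0%R, 1%R]) (- entropy t)%:E = mean_negentropy%:E)%E.
Proof. by rewrite fineK //; apply: (integrable_fin_num I01); exact: integrable_negentropy. Qed.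

Lemma integrable_exprn n : P.-integrable `[0%R, 1%R] (EFin \o (fun t => t ^+ n)).
Proof.
apply: (@integrable_bounded01 _ 1); first exact/measurable_funX/measurable_id.
by move=> t /andP[t0 t1]; rewrite normrX exprn_ile1 // ger0_norm.
Qed.

Lemma momentE n : (\int[P]_(t in `[0%R, 1%R]) (t ^+ n)%:E = (moment n)%:E)%E.
Proof. by rewrite fineK //; apply: (integrable_fin_num I01); exact: integrable_exprn. Qed.

Lemma moment1E : (\int[P]_(t in `[0%R, 1%R]) t%:E = (moment 1)%:E)%E.
Proof. by rewrite -momentE; apply: eq_integral => t _; rewrite expr1. Qed.

Lemma integral_monomial c n :
  (\int[P]_(t in `[0%R, 1%R]) (c * t ^+ n)%:E = (c * moment n)%:E)%E.
Proof. by rewrite EFinM -momentE; exact: (integralZl I01 (integrable_exprn n) c). Qed.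

Hypothesis hP : prior P.

Lemma moment0 : moment 0 = 1.
Proof.
rewrite /moment (_ : \int[P]_(t in _) _ = \int[P]_(t in `[0%R, 1%R]) (cst 1%:E) t)%E.
  by rewrite integral_cst // mul1e; exact: (congr1 fine hP).
by apply: eq_integral => t _; rewrite expr0.
Qed.

Lemma integral_risk_form x y z :
  (\int[P]_(t in `[0%R, 1%R]) (risk_form x y z t)%:E =
   (mean_negentropy + moment 2 * x + (moment 1 - moment 2) * y
    + (1 - 2 * moment 1 + moment 2) * z)%:E)%E.
Proof.
transitivity (\int[P]_(t in `[0%R, 1%R])
  ((- entropy t)%:E + ((x - y + z) * t ^+ 2)%:E + ((y - 2 * z) * t ^+ 1)%:E
   + (z * t ^+ 0)%:E))%E.
  by apply: eq_integral => t _; rewrite -!EFinD /risk_form; congr EFin; ring.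
have iM c n : P.-integrable `[0%R, 1%R] (fun t => (c * t ^+ n)%:E).
  exact: (integrableZl I01 c (integrable_exprn n)).
rewrite !(integralD I01) ?integral_monomial ?moment0 ?integral_negentropy.
  by rewrite -!EFinD; congr EFin; ring.
all: by repeat (apply: (integrableD I01) || exact: integrable_negentropy || exact: iM).
Qed.

Lemma bayes_riskE a b : 0 < a < 1 -> 0 < b < 1 ->
  bayes_risk P (a, b) =
  (mean_negentropy + moment 2 * - ln b + (moment 1 - moment 2) * (- ln (1 - b) - ln a)
   + (1 - 2 * moment 1 + moment 2) * - ln (1 - a))%:E.
Proof.
by move=> aI bI; rewrite /bayes_risk -integral_risk_form; apply: eq_integral => t _; rewrite riskE.
Qed.

Lemma bayes_delta_star_moments : bayes P delta_star -> moment 1 = 1 / 2 /\ moment 2 = 2 / 5.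
Proof.
move=> [_ dB]; set m1 := moment 1; set m2 := moment 2.
have fifthI : (0 : R) < 5^-1 < (1 : R) by apply/andP; split; lra.
have four_fifthsI : (0 : R) < 4 / 5 < (1 : R) by apply/andP; split; lra.
have b_opt (b : R) : 0 < b < 1 -> loglik m2 (m1 - m2) b <= loglik m2 (m1 - m2) (4 / 5).
  move=> /[dup] bI /andP[b0 b1].
  have /dB : decisions (5^-1, b) by rewrite /decisions /=; split; apply/andP; split; lra.
  by rewrite /delta_star !bayes_riskE // lee_fin -/m1 -/m2 /loglik; lra.
have a_opt (a : R) : 0 < a < 1 ->
    loglik (m1 - m2) (1 - 2 * m1 + m2) a <= loglik (m1 - m2) (1 - 2 * m1 + m2) 5^-1.
  move=> /[dup] aI /andP[a0 a1].
  have /dB : decisions (a, 4 / 5) by rewrite /decisions /=; split; apply/andP; split; lra.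
  by rewrite /delta_star !bayes_riskE // lee_fin -/m1 -/m2 /loglik; lra.
have := loglik_argmax four_fifthsI b_opt; have := loglik_argmax fifthI a_opt.
lra.
Qed.

Lemma bayes_delta_star : moment 1 = 1 / 2 -> moment 2 = 2 / 5 -> bayes P delta_star.
Proof.
move=> m1 m2; split=> [|[a b] dab]; first exact: delta_star_decision.
apply: le_trans (le_integral_pointwise _); last first.
  by move=> t; rewrite /= in_itv /= => tI; exact: risk_ge_tangent.
rewrite /delta_star bayes_riskE; [|lra|lra].
rewrite integral_risk_form lee_fin /nlog_tangent m1 m2.
rewrite (_ : 1 - 4 / 5 = 5^-1); last by field.
rewrite (_ : 1 - 5^-1 = 4 / 5); last by field.
lra.
Qed.

End bayes.

Theorem corollary1 (R : realType) (P : probability R R) (hP : prior P) :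
  minimax_prior P <->
  ((\int[P]_(t in `[0%R, 1%R]) t%:E)%E = (1 / 2 : R)%:E /\
   (\int[P]_(t in `[0%R, 1%R]) (t ^+ 2)%:E)%E = (2 / 5 : R)%:E).
Proof.
rewrite moment1E momentE.
split=> [[d [dB /minimax_eq_delta_star dE]]|[[m1] [m2]]].
  by rewrite dE in dB; have [-> ->] := bayes_delta_star_moments P hP dB.
by exists delta_star; split; [exact: bayes_delta_star | exact: minimax_delta_star].
Qed.
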